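(* Let $q$ be a prime power, $n,r$ integers with $r\le\lfloor n/2\rfloor$, and $0\le u,s\le r$, $1\le d\le r$. Let ${\bf X} = ({\bf A}\mid{\bf B})\in\mathrm{GF}(q)^{r\times n}$ with ${\bf A}$ having $r$ columns and ${\bf B}$ having $n-r$ columns, and write ${\bf A} = ({\bf A}_1\mid{\bf a}\mid{\bf A}_2)$, ${\bf B}=({\bf B}_1\mid{\bf b}\mid{\bf B}_2)$, where ${\bf a}$ and ${\bf b}$ are the $d$-th columns of ${\bf A}$ and ${\bf B}$ respectively. Then ${\bf X}\in F(u,s,d)$ if and only if $\mathrm{rk}({\bf X}) = r$, $\mathrm{rk}({\bf B})\le u$, and $\mathrm{rk}({\bf B}_1-{\bf A}_1\mid{\bf b}-{\bf a}\mid{\bf B}_2)\le s$.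
   Context: $E_r(q,n)$ is the set of $r$-dimensional subspaces of $\mathrm{GF}(q)^n$ with injection distance $d_{\mathrm{I}}(U,V)=\dim(U+V)-\min\{\dim U,\dim V\}$; $B_t(U)=\{V\in E_r(q,n): d_{\mathrm{I}}(U,V)\le t\}$; $R({\bf M})$ is the row space of ${\bf M}$. For $0\le d\le r$, ${\bf P}_d\in\mathrm{GF}(q)^{r\times(n-r)}$ is the matrix with ${\bf I}_d$ in its top-left $d\times d$ block and zeros elsewhere, and $U_d = R({\bf I}_r\mid{\bf P}_d)$. $F(u,s,d)$ is the set of all matrices in $\mathrm{GF}(q)^{r\times n}$ of rank $r$ whose row space lies in $B_u(U_0)\cap B_s(U_d)$. *)

From HB Require Import structures.
From mathcomp Require Import all_boot all_order all_algebra all_field.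
Set Implicit Arguments. Unset Strict Implicit. Unset Printing Implicit Defensive.
Import GRing.Theory.
Local Open Scope ring_scope.

(* Subspaces of GF(q)^n are represented as row spaces R(M) of matrices M.
   dim R(M) = \rank M and R(M) + R(N) = R((M + N)%MS). *)

Definition injdist (F : fieldType) (k l n : nat)
  (U : 'M[F]_(k, n)) (V : 'M[F]_(l, n)) : nat :=
  (\rank (U + V)%MS - minn (\rank U) (\rank V))%N.

Definition Pmx (F : fieldType) (r m d : nat) : 'M[F]_(r, m) :=
  \matrix_(i < r, j < m) (if (i < d)%N && (val i == val j) then 1 else 0).

Definition Ud (F : fieldType) (r m d : nat) : 'M[F]_(r, r + m) :=
  row_mx 1%:M (Pmx F r m d).

(* B_t(U) membership for the row space of X, restricted to E_r(q,n) *)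
Definition in_ball (F : fieldType) (r n t : nat)
  (U : 'M[F]_(r, n)) (X : 'M[F]_(r, n)) : bool :=
  (\rank X == r) && (injdist X U <= t)%N.

Definition Fset (F : fieldType) (r m u s d : nat) (X : 'M[F]_(r, r + m)) : bool :=
  [&& \rank X == r, in_ball u (Ud F r m 0) X & in_ball s (Ud F r m d) X].

(* For X = (A | B) with A = lsubmx X (r columns), B = rsubmx X (m columns):
   the matrix (B_1 - A_1 | b - a | B_2), where a, b are the d-th columns
   (1-indexed), i.e. columns j < d (0-indexed) are B - A and the rest are B. *)
Definition diffBA (F : fieldType) (r m d : nat) (X : 'M[F]_(r, r + m)) : 'M[F]_(r, m) :=
  \matrix_(i < r, j < m)
    (if (j < d)%N
     then rsubmx X i j - X i (widen_ord (leq_addl r m) j)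
     else rsubmx X i j).

From mathcomp Require Import all_boot all_order all_algebra all_field.
Local Open Scope ring_scope.
Import GRing.Theory.

(* For a full-rank X = (A | B) and U = (I | P), X = A U + (0 | B - A P), so the
   row space of X + U is spanned by U and (0 | B - A P) and has dimension
   r + rk(B - A P); the injection distance between the two r-dimensional
   spaces is therefore rk(B - A P).  With P = P_0 = 0 this is rk B, and with
   P = P_d the product A P_d is A_1, a moved to the first d columns, giving
   the matrix (B_1 - A_1 | b - a | B_2). *)

Section RowSpaces.
Variable F : fieldType.

Lemma mxrank_row_mx1 r m (P : 'M[F]_(r, m)) : \rank (row_mx 1%:M P) = r.
Proof.
apply/eqP; rewrite eqn_leq rank_leq_row /=.
apply: leq_trans (mxrankM_maxl _ (col_mx 1%:M 0)).
by rewrite mul_row_col mulmx0 addr0 mulmx1 mxrank1.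
Qed.

Lemma mxrank_col_row_mx1 r m (P C : 'M[F]_(r, m)) :
  \rank (col_mx (row_mx 1%:M P) (row_mx 0 C)) = (r + \rank C)%N.
Proof.
have shear_free : row_free (block_mx 1%:M (- P) 0 1%:M).
  by rewrite row_free_unit unitmxE det_ublock !det1 mulr1 unitr1.
rewrite -block_mxEv -(mxrankMfree _ shear_free) mulmx_block.
rewrite !mulmx1 !mul1mx !mul0mx !mulmx0 addr0 add0r addNr add0r.
by rewrite rank_diag_block_mx mxrank1.
Qed.

Lemma mxrank_adds_row_mx1 r m (X : 'M[F]_(r, r + m)) (P : 'M_(r, m)) :
  \rank (X + row_mx 1%:M P)%MS = (r + \rank (rsubmx X - lsubmx X *m P)%R)%N.
Proof.
have defX : X = lsubmx X *m row_mx 1%:M P + row_mx 0 (rsubmx X - lsubmx X *m P).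
  by rewrite mul_mx_row mulmx1 add_row_mx addr0 addrC subrK hsubmxK.
rewrite addsmxC {1}defX (addsmx_addKl _ (submxMl _ _)) addsmxE.
exact: mxrank_col_row_mx1.
Qed.

Lemma injdist_row_mx1 r m (X : 'M[F]_(r, r + m)) (P : 'M_(r, m)) :
  \rank X = r -> injdist X (row_mx 1%:M P) = \rank (rsubmx X - lsubmx X *m P).
Proof.
by move=> rkX; rewrite /injdist mxrank_adds_row_mx1 rkX mxrank_row_mx1 minnn addKn.
Qed.

Lemma Pmx0 r m : Pmx F r m 0 = 0.
Proof. by apply/matrixP=> i j; rewrite !mxE. Qed.

Lemma diffBA_Pmx r m d (X : 'M[F]_(r, r + m)) :
  (d <= r)%N -> diffBA d X = rsubmx X - lsubmx X *m Pmx F r m d.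
Proof.
move=> le_dr; apply/matrixP=> i j; rewrite !mxE.
case: ifP => lt_jd.
  have lt_jr : (j < r)%N by apply: leq_trans lt_jd le_dr.
  rewrite (bigD1 (Ordinal lt_jr)) //= big1 ?addr0.
    by rewrite !mxE /= lt_jd eqxx mulr1; congr (_ - X i _); apply: val_inj.
  move=> k /eqP ne_kj; rewrite !mxE.
  case: ifP => [/andP [_ /eqP eq_kj]|]; last by rewrite mulr0.
  by case: ne_kj; apply: val_inj.
rewrite big1 ?subr0 // => k _; rewrite !mxE.
case: ifP => [/andP [lt_kd /eqP eq_kj]|]; last by rewrite mulr0.
by rewrite -eq_kj lt_kd in lt_jd.
Qed.

End RowSpaces.

Theorem lemma10 (F : finFieldType) (r m u s d : nat)
  (Hrm : (r <= m)%N) (Hu : (u <= r)%N) (Hs : (s <= r)%N)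
  (Hd1 : (1 <= d)%N) (Hdr : (d <= r)%N) (X : 'M[F]_(r, r + m)) :
  @Fset F r m u s d X =
  [&& \rank X == r, (\rank (rsubmx X) <= u)%N & (\rank (@diffBA F r m d X) <= s)%N].
Proof.
rewrite /Fset /in_ball /Ud; case: eqP => //= rkX.
by rewrite !injdist_row_mx1 // Pmx0 mulmx0 subr0 diffBA_Pmx.
Qed.
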